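(* Let $G$ be a connected bipartite graph with color classes $E$ and $V$. Let $\mathbf f,\mathbf g$ be hypertrees of $(V,E)$ with $\mathbf g=\mathbf f-\mathbf i_{\{e\}}+\mathbf i_{\{e'\}}$ for some $e\ne e'$ in $E$, and let $l$ be the line segment in $P_E$ from $\mathbf f^+$ to $\mathbf g^+$. Let $\Gamma$ be a spanning tree inducing $\mathbf f$ and suppose $\mathbf f^+$ is an interior point of the Minkowski cell $M_\Gamma$. Let $\varepsilon_1$ be the first edge of the unique path in $\Gamma$ from $e$ to $e'$. Then $l$ leaves $M_\Gamma$ through the codimension one stratum of the boundary of $M_\Gamma$ corresponding to removing $\varepsilon_1$ from $\Gamma$, i.e. at the point where $l$ exits $M_\Gamma$, the weight of $\varepsilon_1$ in the direct sum representation is $0$.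
   Context: A hypertree of $(V,E)$ is $\mathbf f\colon E\to\mathbf N$ such that some spanning tree $\Gamma$ of $G$ has degree $\mathbf f(e)+1$ at each $e\in E$ ($\Gamma$ induces $\mathbf f$). $\mathbf i_S$ is an indicator vector and $\mathbf f^+=\mathbf f+\frac1{|E|}\mathbf i_E$. For $v\in V$, $\Delta_v=\operatorname{conv}\{\mathbf i_{\{e\}}\mid ev\in G\}$ and $P_E=\sum_{v\in V}\Delta_v\subset\mathbf R^E$ (Minkowski sum). For a spanning tree $\Gamma$, $\Delta^\Gamma_v=\operatorname{conv}\{\mathbf i_{\{e\}}\mid ev\in\Gamma\}$ and $M_\Gamma=\sum_{v\in V}\Delta^\Gamma_v\subset P_E$; this sum is direct, so each point of $M_\Gamma$ is uniquely described by non-negative weights on the edges of $\Gamma$ (barycentric coordinates in each $\Delta^\Gamma_v$, summing to $1$ at each $v$), and the codimension one stratum corresponding to an edge $\varepsilon$ of $\Gamma$ is the set of points of $M_\Gamma$ where the weight of $\varepsilon$ is $0$. *)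

From mathcomp Require Import all_boot all_order all_algebra.
Set Implicit Arguments. Unset Strict Implicit. Unset Printing Implicit Defensive.
Import Order.TTheory GRing.Theory Num.Theory.
Local Open Scope ring_scope.

Section BipGraph.
Variables (E V : finType).

(* A bipartite graph G with colour classes E and V is given by its edge set,
   a set of pairs (e, v).  A subgraph (e.g. a spanning tree) is a set of such pairs. *)

Definition badj (S : {set E * V}) : rel (E + V) :=
  fun a b => match a, b with
             | inl e, inr v => (e, v) \in S
             | inr v, inl e => (e, v) \in S
             | _, _ => false
             end.

Definition bconnected (S : {set E * V}) : Prop :=
  forall a b : E + V, connect (badj S) a b.

Definition bacyclic (S : {set E * V}) : Prop :=
  ~ exists c : seq (E + V), (2 < size c)%N /\ ucycle (badj S) c.

Definition spanning_tree (G T : {set E * V}) : Prop :=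
  T \subset G /\ bconnected T /\ bacyclic T.

Definition degE (T : {set E * V}) (e : E) : nat := #|[set v | (e, v) \in T]|.

Definition induces (T : {set E * V}) (f : E -> nat) : Prop :=
  forall e, degE T e = (f e).+1.

Definition hypertree (G : {set E * V}) (f : E -> nat) : Prop :=
  exists T, spanning_tree G T /\ induces T f.

Variable R : realFieldType.

Definition fplus (f : E -> nat) : E -> R := fun x => (f x)%:R + #|E|%:R^-1.

Definition Mrep (T : {set E * V}) (w : E -> V -> R) (x : E -> R) : Prop :=
  [/\ forall e v, (e, v) \notin T -> w e v = 0,
      forall e v, 0 <= w e v,
      forall v, \sum_(e : E) w e v = 1
    & forall e, x e = \sum_(v : V) w e v].

(* the Minkowski cell M_T = sum_v Delta^T_v *)
Definition inMcell (T : {set E * V}) (x : E -> R) : Prop := exists w, Mrep T w x.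

(* interior point of M_T, relative to the affine hyperplane
   { y | sum_e y_e = |V| } which is the affine hull of P_E (and of M_T) *)
Definition Mcell_interior (T : {set E * V}) (x : E -> R) : Prop :=
  exists2 d : R, 0 < d &
    forall y : E -> R, \sum_(e : E) y e = #|V|%:R ->
      (forall e, `|y e - x e| < d) -> inMcell T y.

Definition seg (x y : E -> R) (t : R) : E -> R := fun z => (1 - t) * x z + t * y z.

End BipGraph.

From mathcomp Require Import all_boot all_order all_algebra.
From mathcomp Require Import ring lra zify.
Set Implicit Arguments. Unset Strict Implicit. Unset Printing Implicit Defensive.
Import Order.TTheory GRing.Theory Num.Theory.
Local Open Scope ring_scope.

(* In the direct sum representation the weight of a tree edge (a, b) is forced
   by the point x: if C is the component of Γ - (a, b) containing b, it is the
   number of V-vertices in C minus the sum of x over the E-vertices in C.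
   Along l, x moves by t (i_{e'} - i_e), so the weights of the edges crossed
   from E to V on the path from e to e' drop by t, those crossed from V to E
   rise by t, and the others stay put; shifting weight along the path realises
   this as long as the dropping weights are nonnegative.  At f^+ each weight is
   an integer minus |C ∩ E| / |E|, and C shrinks along the path, so the first
   edge ε1 carries the least dropping weight and is the first to vanish. *)

Section BipartiteConnect.
Variables (E V : finType).
Implicit Types (S : {set E * V}) (x y z n : E + V).

Lemma badj_sym S : symmetric (badj S).
Proof. by case=> [x|x] [y|y]. Qed.

Lemma connect_badj_sym S : connect_sym (badj S).
Proof. exact/sym_connect_sym/badj_sym. Qed.

Lemma badj_setD1 S q y z : badj (S :\ q) y z -> badj S y z.
Proof. by case: q => a b; case: y z => [y|y] [z|z] //=; rewrite in_setD1 => /andP[]. Qed.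

Lemma badj_setD1_edge S a b y z : badj S y z -> ~~ badj (S :\ (a, b)) y z ->
  (y = inl a /\ z = inr b) \/ (y = inr b /\ z = inl a).
Proof.
by case: y z => [y|y] [z|z] //=; rewrite in_setD1 => ->;
  rewrite andbT negbK => /eqP [-> ->]; auto.
Qed.

Lemma badj_edge S y z : badj S y z -> exists a b, (a, b) \in S /\
  ((y = inl a /\ z = inr b) \/ (y = inr b /\ z = inl a)).
Proof.
case: y z => [y|y] [z|z] //= yzS; first by exists y, z; split; [|left].
by exists z, y; split; [|right].
Qed.

Lemma path_setD1 S a b n x s : n = inl a \/ n = inr b -> n \notin x :: s ->
  path (badj S) x s -> path (badj (S :\ (a, b))) x s.
Proof.
move=> n_ab; elim: s x => [|y s IH] x //=.
rewrite in_cons negb_or => /andP[nx nys] /andP[xy ys].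
rewrite IH // andbT; apply: contraT => xyD.
move: nys; rewrite in_cons negb_or => /andP[ny _].
by case: (badj_setD1_edge xy xyD) => -[ex ey]; case: n_ab => en; subst;
  rewrite ?eqxx in nx ny.
Qed.

Lemma connect_setD1 S p q n x z : n = inl q.1 \/ n = inr q.2 ->
  ~~ connect (badj (S :\ p)) x n ->
  connect (badj (S :\ p)) x z -> connect (badj (S :\ q)) x z.
Proof.
case: q => a b /= n_ab xn /connectP [s xs ->]; apply/connectP; exists s => //.
apply: (path_setD1 n_ab); first by apply: contra xn => /(path_connect xs).
by apply: sub_path xs => y y'; apply: badj_setD1.
Qed.

Lemma connect_setD1_split S a b z : connect (badj S) (inl a) z ->
  connect (badj (S :\ (a, b))) (inl a) z \/
  connect (badj (S :\ (a, b))) (inr b) z.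
Proof.
case/connectP => s0 /shortenP [s as0 us _ ->] {s0}.
have [bs|bs] := boolP (inr b \in s); last first.
  left; apply/connectP; exists s => //.
  by apply: (path_setD1 (n := inr b)); [right|rewrite in_cons negb_or bs|].
right; case/splitPr: bs as0 us => s1 s2.
rewrite cat_path last_cat /= => /and3P[_ _ bs2] /andP[+ _].
rewrite mem_cat negb_or => /andP[_ as2]; apply/connectP; exists s2 => //.
by apply: (path_setD1 (n := inl a)) bs2; [left|].
Qed.

Lemma bacyclic_setD1 S a b : bacyclic S -> (a, b) \in S ->
  ~ connect (badj (S :\ (a, b))) (inr b) (inl a).
Proof.
move=> Sacyc ab /connectP [s0 bs0 ea].
case/shortenP: bs0 ea => s bs us _ ea.
apply: Sacyc; exists (inr b :: s); split.
  case: s bs us ea => [|y [|z s]] //= /andP[byS _] _ ey.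
  by rewrite /= -ey in_setD1 eqxx in byS.
rewrite /ucycle us andbT /cycle rcons_path -ea /= ab andbT.
by apply: sub_path bs => y z; apply: badj_setD1.
Qed.

Definition cutset S (q : E * V) (e2 : E) : {set E + V} :=
  [set z | connect (badj (S :\ q)) (inl e2) z].

Definition path_edge x s (a : E) (b : V) : Prop :=
  exists s1 s2, s = s1 ++ inr b :: s2 /\ last x s1 = inl a.

End BipartiteConnect.

Section TreeCard.
Variables (E V : finType) (T : {set E * V}) (r : E + V).
Hypotheses (Tconn : bconnected T) (Tacyclic : bacyclic T).

(* Removing a tree edge [p] disconnects its endpoints; [far_end p] is the one
   cut off from the root [r].  This is a bijection from edges to non-root vertices. *)
Definition far_end (p : E * V) : E + V :=
  if connect (badj (T :\ p)) r (inl p.1) then inr p.2 else inl p.1.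

Definition near_end (p : E * V) : E + V :=
  if connect (badj (T :\ p)) r (inl p.1) then inl p.1 else inr p.2.

Lemma far_near_endE p :
  far_end p = inl p.1 /\ near_end p = inr p.2 \/
  far_end p = inr p.2 /\ near_end p = inl p.1.
Proof. by rewrite /far_end /near_end; case: ifP; auto. Qed.

Lemma badj_near_far S p : badj S (near_end p) (far_end p) = (p \in S).
Proof. by case: p => a b; rewrite /far_end /near_end /=; case: ifP. Qed.

Lemma far_endP p : p \in T ->
  ~~ connect (badj (T :\ p)) r (far_end p) /\ connect (badj (T :\ p)) r (near_end p).
Proof.
case: p => a b ab; rewrite /far_end /near_end /=.
have sym := connect_badj_sym (T :\ (a, b)).
case: ifP => ra; split; rewrite ?ra //.
  apply/negP => rb; apply: (bacyclic_setD1 Tacyclic ab).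
  by rewrite sym in rb; apply: connect_trans rb ra.
by case: (connect_setD1_split b (Tconn (inl a) r)); rewrite sym ?ra.
Qed.

Lemma far_end_neq p : p \in T -> far_end p != r.
Proof. by case/far_endP => + _; apply: contra => /eqP ->; rewrite connect0. Qed.

Lemma far_end_inj : {in T &, injective far_end}.
Proof.
move=> p q pT qT fpq; apply/eqP; apply: contraT => pq.
have [nfp rnp] := far_endP pT; have [nfq _] := far_endP qT.
have endq : far_end q = inl q.1 \/ far_end q = inr q.2.
  by case: (far_near_endE q) => -[-> _]; auto.
rewrite -fpq in endq nfq.
have rnq := connect_setD1 endq nfp rnp.
case/negP: nfq; apply: connect_trans rnq (connect1 _).
by rewrite badj_near_far in_setD1 pT andbT.
Qed.

Lemma far_end_surj z : z != r -> exists2 p, p \in T & far_end p = z.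
Proof.
move=> zr; move/connectP: (Tconn z r) => [s0 zs0 rs0].
case/shortenP: zs0 rs0 => s' zs' us' _.
case: s' zs' us' => [|y s] /=; first by move=> _ _ rz; rewrite rz eqxx in zr.
move=> /andP[zy ys] /andP[zys _] ry.
have [a [b [ab zy_ab]]] := badj_edge zy; exists (a, b) => //.
have yr : connect (badj (T :\ (a, b))) r y.
  rewrite connect_badj_sym; apply/connectP; exists s => //.
  by apply: (path_setD1 (n := z)) => //; case: zy_ab => -[-> _]; auto.
have [nf _] := far_endP ab.
by case: zy_ab => -[ez ey]; case: (far_near_endE (a, b)) => -[fa _];
  rewrite /= fa in nf *; subst; rewrite // yr in nf.
Qed.

Lemma card_tree : #|T| = (#|E| + #|V|).-1.
Proof.
have -> : (#|E| + #|V|).-1 = #|[set~ r]| by rewrite cardsC1 card_sum.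
rewrite -(card_in_imset far_end_inj); apply: eq_card => z.
rewrite !inE; apply/imsetP/idP => [[p pT ->]|/far_end_surj [p pT <-]].
  exact: far_end_neq.
by exists p.
Qed.

End TreeCard.

Section Cutsets.
Variables (E V : finType) (S : {set E * V}).
Hypothesis Sacyclic : bacyclic S.

Lemma cutset_path_edge e1 e2 s a b : path (badj S) (inl e1) s ->
  uniq (inl e1 :: s) -> last (inl e1) s = inl e2 -> path_edge (inl e1) s a b ->
  [/\ (a, b) \in S, inr b \in cutset S (a, b) e2, inl a \notin cutset S (a, b) e2
    & inl e1 \notin cutset S (a, b) e2].
Proof.
move=> + + + [s1 [s2 [es ea]]]; rewrite es.
rewrite -cat_cons cat_uniq cat_path ea last_cat ea /=.
move=> /and3P[p1 ab p2] /and4P[_ + _ _]; rewrite negb_or => /andP[nb hn] e2E.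
have na : inl a \notin inr b :: s2.
  apply: contra hn; rewrite in_cons => /orP[//|as2].
  by apply/hasP; exists (inl a) => //; rewrite -ea mem_last.
have e1a : connect (badj (S :\ (a, b))) (inl e1) (inl a).
  by apply/connectP; exists s1; rewrite ?ea //; apply: (path_setD1 (n := inr b)); auto.
have be2 : connect (badj (S :\ (a, b))) (inr b) (inl e2).
  by apply/connectP; exists s2; rewrite ?e2E //; apply: (path_setD1 (n := inl a)); auto.
have ba := bacyclic_setD1 Sacyclic ab; have sym := connect_badj_sym (S :\ (a, b)).
split => //; rewrite inE.
- by rewrite sym.
- by apply/negP => e2a; apply: ba; apply: connect_trans be2 e2a.
- apply/negP => e2e1; apply: ba; apply: connect_trans be2 (connect_trans e2e1 e1a).
Qed.

Lemma cutset_subset a b e v e2 : inl e \notin cutset S (a, b) e2 ->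
  cutset S (a, b) e2 \subset cutset S (e, v) e2.
Proof.
rewrite inE => e2e; apply/subsetP => z; rewrite !inE.
by apply: (connect_setD1 (n := inl e)) e2e; left.
Qed.

End Cutsets.

Section HypertreeSum.
Variables (E V : finType) (R : realFieldType).

Lemma sum_degE (T : {set E * V}) : (\sum_e degE T e)%N = #|T|.
Proof.
transitivity (\sum_e \sum_v (((e, v) \in T) : nat))%N.
  apply: eq_bigr => e _; rewrite /degE -sum1_card big_mkcond /=.
  by apply: eq_bigr => v _; rewrite inE; case: ((e, v) \in T).
rewrite -sum1_card pair_big /= [in RHS]big_mkcond /=.
by apply: eq_bigr => -[e v] _ /=; case: ((e, v) \in T).
Qed.

Lemma sum_fplus (T : {set E * V}) f : bconnected T -> bacyclic T -> induces T f ->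
  (0 < #|E|)%N -> \sum_z fplus R f z = #|V|%:R.
Proof.
move=> Tconn Tacyc Tf E0; case/card_gt0P: (E0) => e _.
have sum_f : (\sum_z f z + 1 = #|V|)%N.
  have := sum_degE T; rewrite (card_tree (inl e) Tconn Tacyc).
  rewrite (eq_bigr (fun z => f z + 1)%N).
    by rewrite big_split /= sum1_card (@eq_card _ _ E) //; move: #|E| E0 => k k0 h; lia.
  by move=> z _; rewrite Tf addn1.
rewrite big_split /= sumr_const (@eq_card _ _ E) // -[_^-1 *+ _]mulr_natr.
rewrite mulVf ?pnatr_eq0 -?lt0n //.
by rewrite -natr_sum -sum_f natrD.
Qed.

End HypertreeSum.

Lemma sum_eq_indicator (R : pzSemiRingType) (I : finType) (i : I) (F : I -> R) :
  \sum_j (j == i)%:R * F j = F i.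
Proof.
rewrite (bigD1 i) //= eqxx mul1r big1 ?addr0 // => j /negbTE ->.
by rewrite mul0r.
Qed.

Section PathFlow.
Variables (E V : finType) (R : realFieldType).
Implicit Types (S : {set E * V}) (x y : E + V) (s : seq (E + V)).

(* Weights moved along a path: each vertex of V passes one unit from the
   E-vertex before it to the E-vertex after it. *)
Definition step_flow x y (a : E) (b : V) : R :=
  match x, y with
  | inl e, inr v => - ((a == e)%:R * (b == v)%:R)
  | inr v, inl e => (a == e)%:R * (b == v)%:R
  | _, _ => 0
  end.

Fixpoint path_flow x s a b : R :=
  if s is y :: s' then step_flow x y a b + path_flow y s' a b else 0.

Lemma path_flow_notin S x s a b :
  path (badj S) x s -> (a, b) \notin S -> path_flow x s a b = 0.
Proof.
move=> + abS; elim: s x => [|y s IH] x //= /andP[xy ys]; rewrite IH // addr0.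
have off e v : (e, v) \in S -> (a == e)%:R * (b == v)%:R = 0 :> R.
  move=> evS; have [ae|] := eqVneq a e; last by rewrite mul0r.
  have [bv|] := eqVneq b v; last by rewrite mulr0.
  by rewrite ae bv evS in abS.
by clear ys IH; case: x y xy => [x|x] [y|y] //= /off ->; rewrite ?oppr0.
Qed.

Lemma sumE_path_flow S x s v : path (badj S) x s ->
  \sum_a path_flow x s a v = (x == inr v)%:R - (last x s == inr v)%:R.
Proof.
elim: s x => [|y s IH] x /=; first by rewrite big1 ?subrr.
move=> /andP[xy ys]; rewrite big_split /= IH // addrA; congr (_ - _).
clear ys IH; case: x y xy => [x|x] [y|y] //= _.
  by rewrite sumrN sum_eq_indicator -[inr y == _]/(y == v) eq_sym addNr.
by rewrite sum_eq_indicator -[inr x == _]/(x == v) eq_sym addr0.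
Qed.

Lemma sumV_path_flow S x s a : path (badj S) x s ->
  \sum_v path_flow x s a v = (last x s == inl a)%:R - (x == inl a)%:R.
Proof.
elim: s x => [|y s IH] x /=; first by rewrite big1 ?subrr.
move=> /andP[xy ys]; rewrite big_split /= IH //.
suff -> : \sum_v step_flow x y a v = (y == inl a)%:R - (x == inl a)%:R.
  by rewrite addrC addrA subrK.
clear ys IH; case: x y xy => [x|x] [y|y] //= _; under eq_bigr do rewrite mulrC.
  by rewrite sumrN sum_eq_indicator -[inl x == _]/(x == a) eq_sym sub0r.
by rewrite sum_eq_indicator -[inl y == _]/(y == a) eq_sym subr0.
Qed.

Lemma step_flow_cases x y a b :
  step_flow x y a b = -1 /\ x = inl a /\ y = inr b \/ 0 <= step_flow x y a b.
Proof.
case: x y => [x|x] [y|y] /=; rewrite ?mulr_ge0 ?ler0n //; try by right.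
have [<-|] := eqVneq a x; last by right; rewrite mul0r oppr0.
have [<-|] := eqVneq b y; last by right; rewrite mulr0 oppr0.
by left; rewrite mulr1.
Qed.

Lemma path_flow_lb x s a b : uniq (x :: s) ->
  0 <= path_flow x s a b \/ -1 <= path_flow x s a b /\ path_edge x s a b.
Proof.
elim: s x => [|y s IH] x /=; first by left.
case/andP=> _ uys; have [[-> [ex ey]]|st0] := step_flow_cases x y a b.
  subst; right; split; last by exists [::], s.
  case: (IH _ uys) => [ge0|[_ [s1 [s2 [es _]]]]]; first by rewrite lerDl.
  by move: uys; rewrite /= es mem_cat in_cons eqxx orbT.
case: (IH _ uys) => [ge0|[ge1 [s1 [s2 [es ea]]]]]; first by left; rewrite addr_ge0.
by right; split; [rewrite -[-1]add0r lerD | exists (y :: s1), s2; rewrite es].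
Qed.

End PathFlow.

Section Cuts.
Variables (E V : finType) (R : realFieldType).
Implicit Types (S : {set E * V}) (C : {set E + V}).

Definition cut_value C (x : E -> R) : R :=
  \sum_v (inr v \in C)%:R - \sum_z (inl z \in C)%:R * x z.

(* Sum the vertex constraints over [C] and the coordinates over [C]: every
   edge of [S] other than [(a, b)] has both or no endpoints in [C], so cancels. *)
Lemma Mrep_cut S a b e2 w x : Mrep S w x -> (a, b) \in S ->
  inr b \in cutset S (a, b) e2 -> inl a \notin cutset S (a, b) e2 ->
  w a b = cut_value (cutset S (a, b) e2) x.
Proof.
set C := cutset S (a, b) e2; case=> w0 _ wsum wx ab bC aC.
have crossing e v : w e v * ((inr v \in C)%:R - (inl e \in C)%:R) =
                    (e == a)%:R * ((v == b)%:R * w a b).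
  have [[-> ->]|ne] := eqVneq (e, v) (a, b).
    by rewrite bC (negbTE aC) !eqxx subr0 mulr1 !mul1r.
  have -> : (e == a)%:R * ((v == b)%:R * w a b) = 0 :> R.
    have [ea|] := eqVneq e a; last by rewrite mul0r.
    have [vb|] := eqVneq v b; last by rewrite mul0r mulr0.
    by rewrite ea vb eqxx in ne.
  have [evS|] := boolP ((e, v) \in S); last by move/w0 ->; rewrite mul0r.
  have ev : badj (S :\ (a, b)) (inl e) (inr v) by rewrite /= in_setD1 ne evS.
  suff -> : (inr v \in C) = (inl e \in C) by rewrite subrr mulr0.
  by rewrite !inE; apply/idP/idP => h; apply: connect_trans h (connect1 _);
    rewrite // badj_sym.
transitivity (\sum_e \sum_v w e v * ((inr v \in C)%:R - (inl e \in C)%:R)).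
  under eq_bigr do under eq_bigr do rewrite crossing.
  by under eq_bigr do rewrite -mulr_sumr; rewrite !sum_eq_indicator.
under eq_bigr do rewrite (eq_bigr _ (fun v _ => mulrBr _ _ _)) sumrB -mulr_suml -wx.
rewrite sumrB exchange_big /=; congr (_ - _).
  by apply: eq_bigr => v _; rewrite -mulr_suml wsum mul1r.
by apply: eq_bigr => e _; rewrite mulrC.
Qed.

Lemma cut_value_shift C x y t e e' :
  (forall z, y z = x z + t * ((z == e')%:R - (z == e)%:R)) ->
  cut_value C y = cut_value C x - t * ((inl e' \in C)%:R - (inl e \in C)%:R).
Proof.
move=> yE; rewrite /cut_value (eq_bigr _ (fun z _ => congr1 _ (yE z))).
under eq_bigr do rewrite mulrDr mulrCA mulrBr
  [(inl _ \in C)%:R * (_ == e')%:R]mulrC [(inl _ \in C)%:R * (_ == e)%:R]mulrC.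
rewrite big_split /= -mulr_sumr sumrB !sum_eq_indicator; ring.
Qed.

Definition cut_frac C : R := (\sum_z (inl z \in C)%:R) * #|E|%:R^-1.

Lemma cut_value_fplus C f :
  exists n : int, cut_value C (fplus R f) = n%:~R - cut_frac C.
Proof.
exists ((\sum_v (inr v \in C) : nat)%:Z - (\sum_z (inl z \in C) * f z)%N%:Z).
rewrite intrB !sumMz /cut_value /cut_frac /fplus mulr_suml -addrA -opprD -big_split /=.
congr (_ - _); apply: eq_bigr => z _.
by rewrite -[(_ * _)%N%:~R]/(_ * _)%N%:R natrM mulrDr.
Qed.

Lemma cut_frac_gt0 C e' : inl e' \in C -> 0 < cut_frac C.
Proof.
move=> e'C; have E0 : (0 < #|E|)%N by apply/card_gt0P; exists e'.
rewrite /cut_frac mulr_gt0 ?invr_gt0 ?ltr0n // (bigD1 e') //= e'C.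
by rewrite ltr_pwDl ?sumr_ge0.
Qed.

Lemma cut_frac_lt1 C e : inl e \notin C -> cut_frac C < 1.
Proof.
move=> eC; have E0 : (0 < #|E|)%N by apply/card_gt0P; exists e.
rewrite /cut_frac ltr_pdivrMr ?ltr0n // mul1r -sum1_card natr_sum (bigD1 e) //=.
rewrite [X in _ < X](bigD1 e) //= (negbTE eC) add0r ltr_pwDl ?ler_sum // => z _.
by rewrite lern1 leq_b1.
Qed.

Lemma cut_frac_subset C C' : C \subset C' -> cut_frac C <= cut_frac C'.
Proof.
move/subsetP=> CC'; rewrite ler_wpM2r ?invr_ge0 // ler_sum // => z _.
by case: (boolP (inl z \in C)) => [/CC' ->|].
Qed.

Lemma Mrep_le1 S w x a b : Mrep S w x -> w a b <= 1 :> R.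
Proof.
case=> _ wge0 wsum _; rewrite -(wsum b) (bigD1 a) //= lerDl.
by apply: sumr_ge0.
Qed.

End Cuts.

Section IntegerParts.
Variable R : realFieldType.

Lemma intr_sub_ge0 (n : int) (c : R) : 0 < c -> 0 <= n%:~R - c -> 1 - c <= n%:~R - c.
Proof.
move=> c0 nc; rewrite lerD2r ler1z.
have : (0 : R) < n%:~R by lra.
by rewrite ltr0z.
Qed.

Lemma intr_sub_le1 (n : int) (c : R) : c < 1 -> n%:~R - c <= 1 -> n%:~R - c <= 1 - c.
Proof.
move=> c1 nc; rewrite lerD2r.
have : (n%:~R : R) < 2 by lra.
rewrite -[X in _ < X]/((2 : int)%:~R) ltr_int => n2; have n1 : n <= 1 by lia.
by rewrite -[1]/(1%:~R) ler_int.
Qed.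

End IntegerParts.

Lemma seg_fplusE (R : realFieldType) (E : finType) (f g : E -> nat) e e' t z :
  (g z)%:Z = (f z)%:Z - (z == e)%:Z + (z == e')%:Z ->
  seg (fplus R f) (fplus R g) t z = fplus R f z + t * ((z == e')%:R - (z == e)%:R).
Proof.
move=> /(congr1 (fun k : int => k%:~R : R)); rewrite /= intrD intrB => gE.
by rewrite /seg /fplus -[(g z)%:R]/((g z)%:Z%:~R) gE; ring.
Qed.

Section SegmentExit.
Variables (R : realFieldType) (E V : finType) (T : {set E * V}).
Variables (f g : E -> nat) (w0 : E -> V -> R) (e e' : E) (v1 : V) (p : seq (E + V)).
Hypotheses (Tacyclic : bacyclic T) (w0rep : Mrep T w0 (fplus R f)).
Hypothesis gE : forall z, (g z)%:Z = (f z)%:Z - (z == e)%:Z + (z == e')%:Z.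
Hypotheses (epath : path (badj T) (inl e) (inr v1 :: p))
  (euniq : uniq (inl e :: inr v1 :: p)) (elast : last (inr v1) p = inl e').

Local Notation s := (inr v1 :: p).
Local Notation lseg := (seg (fplus R f) (fplus R g)).
Let C0 := cutset T (e, v1) e'.

Lemma first_edge_cut : [/\ (e, v1) \in T, inr v1 \in C0, inl e \notin C0 & inl e' \in C0].
Proof.
have [] := cutset_path_edge Tacyclic epath euniq elast (a := e) (b := v1).
  by exists [::], p.
by rewrite /C0 => ? ? ? ?; split => //; rewrite inE connect0.
Qed.

Lemma first_edge_weightE t w : Mrep T w (lseg t) -> w e v1 = w0 e v1 - t.
Proof.
have [ev1T v1C0 eC0 e'C0] := first_edge_cut.
move=> wrep; rewrite (Mrep_cut (e2 := e') wrep) // (Mrep_cut (e2 := e') w0rep) //.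
rewrite (cut_value_shift _ (fun z => seg_fplusE t (gE z))).
by rewrite e'C0 (negbTE eC0) subr0 mulr1.
Qed.

Lemma first_edge_weight_le : w0 e v1 <= 1 - cut_frac R C0.
Proof.
have [ev1T v1C0 eC0 _] := first_edge_cut.
have w0E := Mrep_cut (e2 := e') w0rep ev1T v1C0 eC0.
have [n nE] := cut_value_fplus R C0 f; rewrite w0E nE.
apply: intr_sub_le1; first exact: cut_frac_lt1 eC0.
by rewrite -nE -w0E (Mrep_le1 _ _ w0rep).
Qed.

Lemma first_edge_weight_min a b : path_edge (inl e) s a b -> w0 e v1 <= w0 a b.
Proof.
move=> ab_s; have [abT bC aC eC] := cutset_path_edge Tacyclic epath euniq elast ab_s.
have e'C : inl e' \in cutset T (a, b) e' by rewrite inE connect0.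
have w0E := Mrep_cut (e2 := e') w0rep abT bC aC.
have [n nE] := cut_value_fplus R (cutset T (a, b) e') f.
have w0ab : 1 - cut_frac R (cutset T (a, b) e') <= w0 a b.
  rewrite w0E nE; apply: intr_sub_ge0; first exact: cut_frac_gt0 e'C.
  by rewrite -nE -w0E; case: w0rep.
have := cut_frac_subset R (cutset_subset v1 eC); have := first_edge_weight_le; lra.
Qed.

Lemma Mrep_seg t : 0 <= t <= w0 e v1 ->
  Mrep T (fun a b => w0 a b + t * path_flow R (inl e) s a b) (lseg t).
Proof.
case/andP=> t0 tw; case: (w0rep) => w00 w0ge0 w0sum w0x; split.
- by move=> a b abT; rewrite w00 // (path_flow_notin R epath abT) mulr0 addr0.
- move=> a b; case: (path_flow_lb R a b euniq) => [fl0|[fl1 ab_s]].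
    by rewrite addr_ge0 ?mulr_ge0.
  have := first_edge_weight_min ab_s; have : t * -1 <= t * path_flow R (inl e) s a b.
    by rewrite ler_wpM2l.
  lra.
- move=> v; rewrite big_split /= -mulr_sumr (sumE_path_flow R v epath) w0sum /= elast.
  by rewrite subrr mulr0 addr0.
- move=> z; rewrite (seg_fplusE _ (gE z)) big_split /= -mulr_sumr -w0x.
  rewrite (sumV_path_flow R z epath) /= elast.
  by rewrite -[inl e' == _]/(e' == z) -[inl e == _]/(e == z) !(eq_sym _ z).
Qed.

End SegmentExit.

Theorem lemma4p3 (R : realFieldType) (E V : finType) (G : {set E * V})
  (f g : E -> nat) (e e' : E) (Gam : {set E * V}) :
  bconnected G ->
  hypertree G f -> hypertree G g ->
  e != e' ->
  (forall x : E, (g x)%:Z = (f x)%:Z - (x == e)%:Z + (x == e')%:Z) ->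
  spanning_tree G Gam -> induces Gam f ->
  Mcell_interior Gam (fplus R f) ->
  forall (v1 : V) (p : seq (E + V)),
    path (badj Gam) (inl e) (inr v1 :: p) ->
    uniq (inl e :: inr v1 :: p) ->
    last (inr v1) p = inl e' ->
  (* first edge of the path from e to e' is eps1 = (e, v1) *)
  exists t0 : R,
    [/\ 0 <= t0 < 1,
        (forall t, 0 <= t <= t0 -> inMcell Gam (seg (fplus R f) (fplus R g) t)),
        (forall t, t0 < t <= 1 -> ~ inMcell Gam (seg (fplus R f) (fplus R g) t))
      & forall w, Mrep Gam w (seg (fplus R f) (fplus R g) t0) -> w e v1 = 0].
Proof.
move=> _ _ _ _ gE [_ [Gconn Gacyc]] Gf [d d0 Gint] v1 p epath euniq elast.
have E0 : (0 < #|E|)%N by apply/card_gt0P; exists e.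
have [w0 w0rep] : inMcell Gam (fplus R f).
  apply: Gint; first exact: (sum_fplus R Gconn Gacyc Gf E0).
  by move=> z; rewrite subrr normr0.
have first_weight := first_edge_weightE Gacyc w0rep gE epath euniq elast.
exists (w0 e v1); split.
- have [_ w0ge0 _ _] := w0rep; rewrite w0ge0 /=.
  have := first_edge_weight_le Gacyc w0rep epath euniq elast.
  have [_ _ _ /(cut_frac_gt0 R)] := first_edge_cut Gacyc epath euniq elast.
  lra.
- move=> t t_le; exists (fun a b => w0 a b + t * path_flow R (inl e) (inr v1 :: p) a b).
  exact: Mrep_seg.
- move=> t /andP[t_gt _] [w wrep]; have := first_weight _ _ wrep.
  by case: wrep => _ wge0 _ _; have := wge0 e v1; lra.
- by move=> w wrep; rewrite (first_weight _ _ wrep) subrr.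
Qed.
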